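(* Consider the noisy Hegselmann–Krause model with homogeneously stubborn agents described in the context, with $n\ge 1$ regular agents, a nonempty set $\mathcal{B}_1$ of stubborn agents with common constant opinion $B_1\in[0,1]$, and confidence bound $\epsilon\in(0,1]$. For every initial condition $x(0)\in[0,1]^n$ and every noise bound $\delta\in\left(0,\frac{\epsilon}{2(n+1)}\right)$, almost surely $$d_{\mathcal{V}}:=\limsup_{t\to\infty}\max_{i,j\in\mathcal{V}}|x_i(t)-x_j(t)|\le 2\delta \quad\text{and}\quad d_{\mathcal{V}}^{B_1}:=\limsup_{t\to\infty}\max_{i\in\mathcal{V}}|x_i(t)-B_1|\le (n+1)\delta .$$
   Context: Regular agents: $\mathcal{V}=\{1,\dots,n\}$, with opinions $x_i(t)\in[0,1]$, $t=0,1,2,\dots$. Stubborn agents: a finite nonempty index set $\mathcal{B}_1$ disjoint from $\mathcal{V}$, with $x_k(t)\equiv B_1$ for all $k\in\mathcal{B}_1$ and all $t\ge0$, where $B_1\in[0,1]$ is fixed. For $i\in\mathcal{V}$, the neighbor set is $\mathcal{N}(i,x(t))=\{j\in\mathcal{V}\cup\mathcal{B}_1: |x_j(t)-x_i(t)|\le\epsilon\}$ (it contains $i$). The update for $i\in\mathcal{V}$ is $x_i^*(t)=|\mathcal{N}(i,x(t))|^{-1}\sum_{j\in\mathcal{N}(i,x(t))}x_j(t)+\xi_i(t+1)$, and $x_i(t+1)=1$ if $x_i^*(t)>1$, $x_i(t+1)=x_i^*(t)$ if $x_i^*(t)\in[0,1]$, $x_i(t+1)=0$ if $x_i^*(t)<0$.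 The noises $\{\xi_i(t)\}_{i\in\mathcal{V},t\ge1}$ are i.i.d. real random variables with $E\xi_1(1)=0$, $E\xi_1(1)^2>0$ and $|\xi_1(1)|\le\delta$ almost surely. *)

From HB Require Import structures.
From mathcomp Require Import all_boot all_order all_algebra.
From mathcomp Require Import all_classical all_reals all_analysis.
Set Implicit Arguments. Unset Strict Implicit. Unset Printing Implicit Defensive.
Import Order.TTheory GRing.Theory Num.Theory.
Import numFieldNormedType.Exports.
Local Open Scope classical_set_scope.
Local Open Scope ring_scope.

Section HK.
Variable R : realType.

Definition clip01 (y : R) : R := if 1 < y then 1 else if y < 0 then 0 else y.

(* The HK average for regular agent i given the regular opinions x : 'I_n -> R,
   a stubborn set B1 of m agents all holding the opinion b, and confidence eps. *)
Definition hk_avg (n m : nat) (eps b : R) (x : 'I_n -> R) (i : 'I_n) : R :=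
  let inN (y : R) := `|y - x i| <= eps in
  let sumV := \sum_(j < n | inN (x j)) x j in
  let cardV := #|[set j : 'I_n | inN (x j)]| in
  let sumB := \sum_(k < m | inN b) b in
  let cardB := #|[set k : 'I_m | inN b]| in
  (sumV + sumB) / (cardV + cardB)%:R.

(* The trajectory: xi t i = xi_i(t+1) is the noise used in the update t -> t+1. *)
Fixpoint hk_traj (n m : nat) (eps b : R) (x0 : 'I_n -> R)
  (xi : nat -> 'I_n -> R) (t : nat) : 'I_n -> R :=
  match t with
  | 0 => x0
  | t'.+1 => fun i =>
      clip01 (hk_avg m eps b (hk_traj m eps b x0 xi t') i + xi t' i)
  end.

Definition diam (n : nat) (x : 'I_n -> R) : R :=
  \big[Num.max/0]_(i < n) \big[Num.max/0]_(j < n) `|x i - x j|.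
Definition dist_to (n : nat) (x : 'I_n -> R) (b : R) : R :=
  \big[Num.max/0]_(i < n) `|x i - b|.

End HK.

Definition mutually_independent d (T : measurableType d) (R : realType)
  (P : probability T R) (I : eqType) (X : I -> T -> R) : Prop :=
  forall (s : seq I) (B : I -> set R),
    uniq s -> (forall k, measurable (B k)) ->
    P (\bigcap_(k in [set` s]) (X k @^-1` B k)) =
    (\prod_(k <- s) P (X k @^-1` B k))%E.

Definition identically_distributed d (T : measurableType d) (R : realType)
  (P : probability T R) (I : Type) (X : I -> T -> R) : Prop :=
  forall (k l : I) (B : set R), measurable B ->
    P (X k @^-1` B) = P (X l @^-1` B).

(* Deterministic part: a noise realization that pushes every regular agent up
   by at least c during K steps with K c >= 1, and then down by at least c
   during K steps, brings all regular agents within eps of B1: the first phase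
   lifts everybody to at least B1, the second brings everybody down to at most
   B1 while the stubborn agents keep them above B1 - eps.  From then on every
   regular agent sees the stubborn ones, so its distance to B1 contracts by
   n/(n+1) up to the noise, which gives the bound (n+1) delta; once all agents
   are within eps/2 of B1 they all compute the same average, so their spread is
   at most the spread 2 delta of the noise.

   Probabilistic part: a centred noise with positive variance takes values
   >= c and <= -c with positive probability for some c > 0.  The events "the
   steering pattern occurs in the N-th block of 2K steps" are independent and
   have the same positive probability, so almost surely one of them occurs. *)

From HB Require Import structures.
From mathcomp Require Import all_boot all_order all_algebra.
From mathcomp Require Import all_classical all_reals all_analysis.
From mathcomp Require Import ring lra measurable_realfun.
Import Order.TTheory GRing.Theory Num.Theory.
Import numFieldNormedType.Exports.
Local Open Scope classical_set_scope.
Local Open Scope ring_scope.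

Lemma expr_le_eventually {R : realType} (a e : R) : 0 <= a < 1 -> 0 < e ->
  exists N, forall k, (N <= k)%N -> a ^+ k <= e.
Proof.
move=> /andP[a0 a1] e0.
have ha : `|a| < 1 by rewrite ger0_norm.
have /cvgr0_norm_lt /(_ e e0) [N _ hN] := cvg_geometric 1 ha.
exists N => k hk.
by have := hN k hk; rewrite /= mul1r ger0_norm ?exprn_ge0 // => /ltW.
Qed.

Lemma limn_sup_le_eventually {R : realType} (u : R^nat) (L C : R) :
  (forall t, `|u t| <= C) ->
  (forall e, 0 < e -> exists N, forall t, (N <= t)%N -> u t <= L + e) ->
  limn_sup u <= L.
Proof.
move=> hC hL.
have bu : bounded_fun u.
  rewrite /bounded_near; near=> M => t _ /=.
  apply: le_trans (hC t) _; near: M; apply: nbhs_pinfty_ge; exact: num_real.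
rewrite limn_supE //; apply/ler_addgt0Pr => e e0; have [N hN] := hL e e0.
apply: le_trans (ge_inf _ _) _.
- exact: bounded_fun_has_lbound_sups.
- by exists N.
apply: ge_sup; first by exists (u N), N => /=.
by move=> _ [k /= hk <-]; apply: hN.
Unshelve. all: by end_near. Qed.

Lemma bigmax_norm_le1 {R : realType} (I : finType) (F : I -> R) :
  (forall i, 0 <= F i <= 1) -> `|\big[Num.max/0]_(i : I) F i| <= 1.
Proof.
move=> hF; have /andP[h0 h1] : 0 <= \big[Num.max/0]_(i : I) F i <= 1.
  apply: (big_ind (fun v => 0 <= v <= 1)) => //; first by rewrite lexx ler01.
  by move=> u v /andP[u0 u1] /andP[v0 v1]; rewrite le_max u0 ge_max u1 v1.
by rewrite ger0_norm.
Qed.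

Lemma card_set_pred (I : finType) (p : pred I) : #|[set x | p x]| = #|[pred x | p x]|.
Proof. by apply: eq_card => x; apply/idP/idP => [/set_mem //|]; exact: mem_set. Qed.

Section Clip01.
Context {R : realType}.
Implicit Types y z : R.

Lemma clip01_in01 y : 0 <= clip01 y <= 1.
Proof.
rewrite /clip01; case: ifP => h1; first by rewrite ler01 lexx.
case: ifP => h2; first by rewrite lexx ler01.
by rewrite leNgt h2 leNgt h1.
Qed.

Lemma clip01_ge_min y : Num.min y 1 <= clip01 y.
Proof. by rewrite /clip01 ge_min; case: ltP; case: ltP => *; lra. Qed.

Lemma clip01_le_max y : clip01 y <= Num.max y 0.
Proof. by rewrite /clip01 le_max; case: ltP; case: ltP => *; lra. Qed.

Lemma clip01_lipschitz y z : `|clip01 y - clip01 z| <= `|y - z|.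
Proof.
have h1 := ler_norm (y - z); have h2 : z - y <= `|y - z| by rewrite distrC ler_norm.
rewrite /clip01.
by case: (ltP 1 y); case: (ltP y 0); case: (ltP 1 z); case: (ltP z 0) => *;
  rewrite ler_norml; apply/andP; split; lra.
Qed.

End Clip01.

Section HKDynamics.
Context {R : realType} {n m : nat} {eps b : R}.
Hypothesis m_gt0 : (0 < m)%N.
Hypothesis b01 : 0 <= b <= 1.
Hypothesis eps_gt0 : 0 < eps.

Local Notation avg := (hk_avg m eps b).
Local Notation traj := (hk_traj m eps b).
Local Notation neighbors x i := [set j : 'I_n | `|x j - x i| <= eps].

Lemma sum_stubborn (sb : bool) : \sum_(k < m | sb) b = if sb then m%:R * b else 0.
Proof.
case: sb; last by rewrite big_pred0.
by rewrite sumr_const card_ord mulr_natl.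
Qed.

Lemma card_stubborn (sb : bool) : #|[set _ : 'I_m | sb]| = if sb then m else 0%N.
Proof.
rewrite card_set_pred; case: sb; last exact: eq_card0.
by rewrite -[RHS]card_ord; apply: eq_card.
Qed.

Lemma card_neighbors_gt0 (x : 'I_n -> R) i : (0 < #|neighbors x i|)%N.
Proof. by apply/card_gt0P; exists i; rewrite inE /= subrr normr0 ltW. Qed.

Lemma card_neighbors_le (x : 'I_n -> R) i : (#|neighbors x i| <= n)%N.
Proof. by rewrite -[X in (_ <= X)%N]card_ord max_card. Qed.

Lemma hk_avgE (x : 'I_n -> R) i : let sb := `|b - x i| <= eps in
  avg x i = (\sum_(j < n | `|x j - x i| <= eps) x j + (if sb then m%:R * b else 0))
            / (#|neighbors x i| + (if sb then m else 0))%:R.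
Proof. by rewrite /hk_avg sum_stubborn card_stubborn. Qed.

Lemma sum_neighbors_ge (x : 'I_n -> R) i L :
  (forall j, `|x j - x i| <= eps -> L <= x j) ->
  L * #|neighbors x i|%:R <= \sum_(j < n | `|x j - x i| <= eps) x j.
Proof.
move=> hx; rewrite card_set_pred mulr_natr -sumr_const big_mkcond.
by rewrite [X in _ <= X]big_mkcond; apply: ler_sum => j _; rewrite inE; case: ifP => // /hx.
Qed.

Lemma sum_neighbors_le (x : 'I_n -> R) i U :
  (forall j, `|x j - x i| <= eps -> x j <= U) ->
  \sum_(j < n | `|x j - x i| <= eps) x j <= U * #|neighbors x i|%:R.
Proof.
move=> hx; rewrite card_set_pred mulr_natr -sumr_const big_mkcond.
by rewrite [X in _ <= X]big_mkcond; apply: ler_sum => j _; rewrite inE; case: ifP => // /hx.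
Qed.

Lemma hk_avg_ge (x : 'I_n -> R) i L :
  (forall j, `|x j - x i| <= eps -> L <= x j) ->
  (`|b - x i| <= eps -> L <= b) -> L <= avg x i.
Proof.
move=> hx hb; rewrite hk_avgE /=.
rewrite ler_pdivlMr ?ltr0n ?addn_gt0 ?card_neighbors_gt0 // natrD mulrDr.
apply: lerD; first exact: sum_neighbors_ge.
by case: ifP => h; rewrite ?mulr0 // mulrC ler_wpM2l ?ler0n ?hb.
Qed.

Lemma hk_avg_le (x : 'I_n -> R) i U :
  (forall j, `|x j - x i| <= eps -> x j <= U) ->
  (`|b - x i| <= eps -> b <= U) -> avg x i <= U.
Proof.
move=> hx hb; rewrite hk_avgE /=.
rewrite ler_pdivrMr ?ltr0n ?addn_gt0 ?card_neighbors_gt0 // natrD mulrDr.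
apply: lerD; first exact: sum_neighbors_le.
by case: ifP => h; rewrite ?mulr0 // [U * _]mulrC ler_wpM2l ?ler0n ?hb.
Qed.

(* When the stubborn agents are neighbors, the regular neighbors carry weight
   [k / (k + m) <= n / (n + 1)] in the average. *)
Definition rate : R := n%:R / (n%:R + 1).

Lemma rate_ge0 : 0 <= rate.
Proof. by rewrite /rate divr_ge0 // ?ler0n // addr_ge0 ?ler0n. Qed.

Lemma rate_mulDn1 : rate * (n%:R + 1) = n%:R.
Proof. by rewrite /rate mulfVK // gt_eqF // ltr_pwDr ?ltr01 ?ler0n. Qed.

Lemma rate_lt1 : rate < 1.
Proof. by rewrite /rate ltr_pdivrMr ?mul1r ?ltrDl ?ltr01 // ltr_pwDr ?ltr01 ?ler0n. Qed.

Lemma rate_mulD_le d u : (n%:R + 1) * d <= u -> rate * u + d <= u.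
Proof.
move=> h; have hN : 0 < n%:R + 1 :> R by rewrite ltr_pwDr ?ltr01 ?ler0n.
rewrite -(ler_pM2l hN) mulrDr mulrA [_ * rate]mulrC rate_mulDn1; nra.
Qed.

Lemma rate_card (k : nat) : (k <= n)%N -> k%:R <= rate * (k + m)%:R.
Proof.
move=> hk.
have hK : k%:R <= n%:R :> R by rewrite ler_nat.
have hM : 1 <= m%:R :> R by rewrite ler1n.
have h0 : 0 <= n%:R :> R by rewrite ler0n.
have hN : 0 < n%:R + 1 :> R by rewrite ltr_pwDr ?ltr01.
rewrite /rate natrD mulrAC ler_pdivlMr //; nra.
Qed.

Lemma hk_avg_ge_stubborn (x : 'I_n -> R) i u : 0 <= u -> `|b - x i| <= eps ->
  (forall j, `|x j - x i| <= eps -> b - u <= x j) -> b - rate * u <= avg x i.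
Proof.
move=> hu hs hx; rewrite hk_avgE /= hs.
have := @rate_card _ (card_neighbors_le x i); have := sum_neighbors_ge _ _ _ hx.
have := card_neighbors_gt0 x i; have := rate_ge0.
set k := #|_| => ha hk hS hA.
rewrite ler_pdivlMr ?ltr0n ?addn_gt0 ?hk // natrD.
have hK : 0 <= k%:R :> R by rewrite ler0n.
by move: hA; rewrite natrD; nra.
Qed.

Lemma hk_avg_le_stubborn (x : 'I_n -> R) i u : 0 <= u -> `|b - x i| <= eps ->
  (forall j, `|x j - x i| <= eps -> x j <= b + u) -> avg x i <= b + rate * u.
Proof.
move=> hu hs hx; rewrite hk_avgE /= hs.
have := @rate_card _ (card_neighbors_le x i); have := sum_neighbors_le _ _ _ hx.
have := card_neighbors_gt0 x i; have := rate_ge0.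
set k := #|_| => ha hk hS hA.
rewrite ler_pdivrMr ?ltr0n ?addn_gt0 ?hk // natrD.
have hK : 0 <= k%:R :> R by rewrite ler0n.
by move: hA; rewrite natrD; nra.
Qed.

Lemma hk_avg_const (x : 'I_n -> R) i j : (forall k, `|x k - b| <= eps / 2) ->
  avg x i = avg x j.
Proof.
move=> hx.
have hall k l : `|x k - x l| <= eps.
  by have := hx k; have := hx l; rewrite !ler_norml => /andP[? ?] /andP[? ?]; lra.
have hs k : `|b - x k| <= eps.
  by have := hx k; rewrite distrC !ler_norml => /andP[? ?]; lra.
rewrite !hk_avgE /= !hs.
rewrite [in LHS](eq_bigl xpredT) => [|k]; last by rewrite hall.
rewrite [in RHS](eq_bigl xpredT) => [|k]; last by rewrite hall.
congr (_ / (_ + _)%:R); rewrite !card_set_pred.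
by apply: eq_card => k; rewrite !unfold_in /= !hall.
Qed.

Definition hk_step (x z : 'I_n -> R) (i : 'I_n) : R := clip01 (avg x i + z i).

Lemma hk_trajS x0 (z : nat -> 'I_n -> R) t :
  traj x0 z t.+1 = hk_step (traj x0 z t) (z t).
Proof. by []. Qed.

Lemma hk_traj01 x0 (z : nat -> 'I_n -> R) : (forall i, 0 <= x0 i <= 1) ->
  forall t i, 0 <= traj x0 z t i <= 1.
Proof. by move=> h [|t] i //=; exact: clip01_in01. Qed.

Lemma hk_step_ge_min x z c L : (forall i, c <= z i) -> (forall j, L <= x j) ->
  L <= b -> forall i, Num.min (L + c) 1 <= hk_step x z i.
Proof.
move=> hz hx hL i; rewrite /hk_step; apply: le_trans (clip01_ge_min _).
have : L <= avg x i by apply: hk_avg_ge.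
by have := hz i; rewrite le_min !ge_min lexx !orbT andbT => *; apply/orP; left; lra.
Qed.

Lemma hk_step_le_max x z c U : (forall i, z i <= - c) -> (forall j, x j <= U) ->
  b <= U -> forall i, hk_step x z i <= Num.max (U - c) 0.
Proof.
move=> hz hx hU i; rewrite /hk_step; apply: le_trans (clip01_le_max _) _.
have : avg x i <= U by apply: hk_avg_le.
by have := hz i; rewrite ge_max !le_max lexx !orbT andbT => *; apply/orP; left; lra.
Qed.

Lemma hk_step_ge_stubborn x z u d : 0 <= u <= eps -> 0 <= d ->
  (forall i, - d <= z i) -> (forall j, b - u <= x j) ->
  forall i, b - (rate * u + d) <= hk_step x z i.
Proof.
move=> /andP[u0 ue] d0 hz hx i; rewrite /hk_step; apply: le_trans (clip01_ge_min _).
have ha := rate_ge0; case/andP: b01 => b0 b1.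
rewrite le_min (_ : _ <= 1); last by nra.
suff : b - rate * u <= avg x i by have := hz i; rewrite andbT; lra.
have [hs|hs] := leP `|b - x i| eps; first exact: hk_avg_ge_stubborn.
have : b <= avg x i.
  apply: hk_avg_ge => [j|]; last by rewrite leNgt hs.
  have := hx i; move: hs; rewrite ltr_normr => /orP[] ? ?; first lra.
  by rewrite ler_norml => /andP[? ?]; lra.
nra.
Qed.

Lemma hk_step_le_stubborn x z u d : 0 <= u <= eps -> 0 <= d ->
  (forall i, z i <= d) -> (forall j, x j <= b + u) ->
  forall i, hk_step x z i <= b + (rate * u + d).
Proof.
move=> /andP[u0 ue] d0 hz hx i; rewrite /hk_step; apply: le_trans (clip01_le_max _) _.
have ha := rate_ge0; case/andP: b01 => b0 b1.
rewrite ge_max (_ : 0 <= _); last by nra.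
suff : avg x i <= b + rate * u by have := hz i; rewrite andbT; lra.
have [hs|hs] := leP `|b - x i| eps; first exact: hk_avg_le_stubborn.
have : avg x i <= b.
  apply: hk_avg_le => [j|]; last by rewrite leNgt hs.
  have := hx i; move: hs; rewrite ltr_normr => /orP[] ? ?; last lra.
  by rewrite ler_norml => /andP[? ?]; lra.
nra.
Qed.

Lemma hk_step_dist x z : (forall k, `|x k - b| <= eps / 2) ->
  forall i j, `|hk_step x z i - hk_step x z j| <= `|z i - z j|.
Proof.
move=> hx i j; rewrite /hk_step (hk_avg_const _ i j hx).
by apply: le_trans (clip01_lipschitz _ _) _; rewrite opprD addrACA subrr add0r.
Qed.

Section Trajectory.
Variables (x0 : 'I_n -> R) (z : nat -> 'I_n -> R) (d : R).
Hypothesis x0_01 : forall i, 0 <= x0 i <= 1.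
Hypothesis d_ge0 : 0 <= d.
Hypothesis z_bound : forall t i, `|z t i| <= d.
Hypothesis d_small : (n%:R + 1) * d <= eps.

Local Notation x := (traj x0 z).

Lemma hk_steer_up c K t0 : 0 < c -> 1 <= K%:R * c ->
  (forall s i, (s < K)%N -> c <= z (t0 + s)%N i) ->
  forall i, b <= x (t0 + K)%N i.
Proof.
move=> c0 hK hup; case/andP: b01 => b0 b1.
suff up s : (s <= K)%N -> forall i, Num.min (s%:R * c) b <= x (t0 + s)%N i.
  by move=> i; have := up K (leqnn K) i; rewrite ge_min => /orP[|//]; lra.
elim: s => [|s IH] hs i.
  by rewrite addn0 mul0r ge_min; have /andP[-> _] := hk_traj01 x0 z x0_01 t0 i.
rewrite addnS hk_trajS.
apply: le_trans (hk_step_ge_min _ (z (t0 + s)%N) c _ _ (IH (ltnW hs)) _ i).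
- rewrite le_min !ge_min -natr1; apply/andP; split; last by rewrite b1 orbT.
  by case: (leP (s%:R * c) b) => hsb; apply/orP; [left|right]; nra.
- by move=> j; apply: hup.
- by rewrite ge_min lexx orbT.
Qed.

(* While the noise pushes everybody down by at least [c], the maximal opinion
   decreases by [c] per step until it reaches [b], and the attraction of the
   stubborn agents keeps everybody above [b - eps]. *)
Lemma hk_steer_down c K t1 : 0 < c -> 1 <= K%:R * c ->
  (forall i, b <= x t1 i) ->
  (forall s i, (s < K)%N -> z (t1 + s)%N i <= - c) ->
  forall i, `|x (t1 + K)%N i - b| <= eps.
Proof.
move=> c0 hK hb hdn; case/andP: b01 => b0 b1.
have he := rate_mulD_le _ _ d_small; have ha := rate_ge0.
suff dn s : (s <= K)%N -> forall i,
    x (t1 + s)%N i <= Num.max (1 - s%:R * c) b /\ b - eps <= x (t1 + s)%N i.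
  move=> i; have [] := dn K (leqnn K) i.
  by rewrite le_max => /orP[] ? ?; rewrite ler_norml; apply/andP; split; lra.
elim: s => [|s IH] hs i.
  rewrite addn0 mul0r subr0 le_max; split.
    by have /andP[_ ->] := hk_traj01 x0 z x0_01 t1 i.
  by apply: le_trans (hb i); rewrite gerBl ltW.
have {}IH := IH (ltnW hs); rewrite addnS hk_trajS; split.
  apply: le_trans (hk_step_le_max _ (z (t1 + s)%N) c _ _ (fun j => (IH j).1) _ i) _.
  - by move=> j; apply: hdn.
  - by rewrite le_max lexx orbT.
  rewrite ge_max !le_max -natr1 b0 orbT andbT.
  by case: (leP (1 - s%:R * c) b) => h; apply/orP; [right|left]; lra.
apply: le_trans (_ : b - (rate * eps + d) <= _); first lra.
apply: hk_step_ge_stubborn => // [|j|j]; first by rewrite lexx ltW.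
- by have := z_bound (t1 + s)%N j; rewrite ler_norml => /andP[].
- exact: (IH j).2.
Qed.

Lemma hk_dist_to_geometric T : (forall i, `|x T i - b| <= eps) ->
  forall s i, `|x (T + s)%N i - b|
    <= (n%:R + 1) * d + rate ^+ s * (eps - (n%:R + 1) * d).
Proof.
move=> hT.
have ha := rate_ge0; have ha1 := rate_lt1; have hae := rate_mulDn1.
have h0 : 0 <= n%:R :> R by rewrite ler0n.
have hw : 0 <= eps - (n%:R + 1) * d by rewrite subr_ge0.
elim=> [|s IH] i; first by rewrite addn0 expr0 mul1r; have := hT i; lra.
have hs1 : rate ^+ s <= 1 by rewrite exprn_ile1 // ltW.
have hs0 : 0 <= rate ^+ s by rewrite exprn_ge0.
set e := (n%:R + 1) * d + rate ^+ s * (eps - (n%:R + 1) * d).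
have he : 0 <= e <= eps.
  have := mulr_ge0 hs0 hw; have := ler_wpM2r hw hs1; rewrite mul1r /e.
  have : 0 <= (n%:R + 1) * d by rewrite mulr_ge0 // addr_ge0.
  by move=> *; apply/andP; split; lra.
have -> : (n%:R + 1) * d + rate ^+ s.+1 * (eps - (n%:R + 1) * d) = rate * e + d.
  by rewrite /e exprS [in RHS]mulrDr [rate * (_ * d)]mulrA hae; ring.
rewrite addnS hk_trajS ler_norml; apply/andP; split.
  suff : b - (rate * e + d) <= hk_step (x (T + s)) (z (T + s)%N) i by lra.
  apply: hk_step_ge_stubborn => // j.
    by have := z_bound (T + s)%N j; rewrite ler_norml => /andP[].
  by have := IH j; rewrite -/e ler_norml => /andP[? ?]; lra.
suff : hk_step (x (T + s)) (z (T + s)%N) i <= b + (rate * e + d) by lra.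
apply: hk_step_le_stubborn => // j.
  by have := z_bound (T + s)%N j; rewrite ler_norml => /andP[].
by have := IH j; rewrite -/e ler_norml => /andP[? ?]; lra.
Qed.

Lemma hk_eventually_near T : (forall i, `|x T i - b| <= eps) ->
  forall e, 0 < e -> exists N, forall t, (N <= t)%N ->
    forall i, `|x t i - b| <= (n%:R + 1) * d + e.
Proof.
move=> hT e e0; set w := eps - (n%:R + 1) * d.
have w0 : 0 <= w by rewrite subr_ge0.
have [N hN] : exists N, forall k, (N <= k)%N -> rate ^+ k <= e / (w + 1).
  by apply: expr_le_eventually; rewrite ?rate_ge0 ?rate_lt1 ?divr_gt0 ?ltr_wpDl.
exists (T + N)%N => t hTt i.
have hTk : (T <= t)%N := leq_trans (leq_addr N T) hTt.
rewrite -(subnKC hTk).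
apply: le_trans (hk_dist_to_geometric _ hT (t - T) i) _; rewrite lerD2l -/w.
have hk : rate ^+ (t - T) <= e / (w + 1) by apply: hN; rewrite leq_subRL.
apply: le_trans (ler_wpM2r w0 hk) _.
by rewrite mulrAC ler_pdivrMr ?ltr_wpDl // ler_pM2l // lerDl.
Qed.

Lemma hk_dist_to_le1 t : `|dist_to (x t) b| <= 1.
Proof.
apply: bigmax_norm_le1 => i; have /andP[? ?] := hk_traj01 x0 z x0_01 t i.
by rewrite normr_ge0 /= ler_norml; apply/andP; split; case/andP: b01 => *; lra.
Qed.

Lemma hk_diam_le1 t : `|diam (x t)| <= 1.
Proof.
have h01 := hk_traj01 x0 z x0_01 t.
apply: bigmax_norm_le1 => i; apply/andP; split.
  by apply: (big_ind (fun v => 0 <= v)) => // u v u0 v0; rewrite le_max u0.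
apply: bigmax_le => // j _; have /andP[? ?] := h01 i; have /andP[? ?] := h01 j.
by rewrite ler_norml; apply/andP; split; lra.
Qed.

Lemma limn_sup_hk_dist_to T : (forall i, `|x T i - b| <= eps) ->
  limn_sup (fun t => dist_to (x t) b) <= (n%:R + 1) * d.
Proof.
move=> hT; apply: (limn_sup_le_eventually _ _ _ hk_dist_to_le1) => e e0.
have [N hN] := hk_eventually_near _ hT _ e0; exists N => t ht.
apply: bigmax_le => [|i _]; last exact: hN.
by apply: addr_ge0 (ltW e0); rewrite mulr_ge0 ?addr_ge0 ?ler0n.
Qed.

Lemma limn_sup_hk_diam T : (n%:R + 1) * d < eps / 2 ->
  (forall i, `|x T i - b| <= eps) -> limn_sup (fun t => diam (x t)) <= 2 * d.
Proof.
move=> hd2 hT; apply: (limn_sup_le_eventually _ _ _ hk_diam_le1) => e e0.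
have [N hN] : exists N, forall t, (N <= t)%N ->
    forall k, `|x t k - b| <= (n%:R + 1) * d + (eps / 2 - (n%:R + 1) * d).
  by apply: hk_eventually_near hT _ _; rewrite subr_gt0.
exists N.+1 => -[//|t] ht; rewrite /diam hk_trajS.
have hnear k : `|x t k - b| <= eps / 2 by have := hN t ht k; rewrite subrKC.
apply: bigmax_le => [|i _]; first by apply: addr_ge0 (ltW e0); rewrite mulr_ge0.
apply: bigmax_le => [|j _]; first by apply: addr_ge0 (ltW e0); rewrite mulr_ge0.
apply: le_trans (hk_step_dist _ (z t) hnear i j) _; apply: le_trans (ler_normB _ _) _.
by have := z_bound t i; have := z_bound t j; lra.
Qed.

End Trajectory.

Lemma hk_limn_sup_bounds x0 (z : nat -> 'I_n -> R) d c K t0 :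
  (forall i, 0 <= x0 i <= 1) -> 0 <= d -> (n%:R + 1) * d < eps / 2 ->
  (forall t i, `|z t i| <= d) -> 0 < c -> 1 <= K%:R * c ->
  (forall s i, (s < K)%N -> c <= z (t0 + s)%N i /\ z (t0 + K + s)%N i <= - c) ->
  limn_sup (fun t => diam (traj x0 z t)) <= 2 * d /\
  limn_sup (fun t => dist_to (traj x0 z t) b) <= (n%:R + 1) * d.
Proof.
move=> x0_01 d0 hd2 hz c0 hK hpat.
have hd : (n%:R + 1) * d <= eps by have := eps_gt0; lra.
have hup := hk_steer_up x0 z x0_01 c K t0 c0 hK (fun s i hs => (hpat s i hs).1).
have hT := hk_steer_down x0 z d x0_01 d0 hz hd c K (t0 + K) c0 hK hup
  (fun s i hs => (hpat s i hs).2).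
split; first exact: limn_sup_hk_diam x0 z d x0_01 d0 hz hd _ hd2 hT.
exact: limn_sup_hk_dist_to x0 z d x0_01 d0 hz hd _ hT.
Qed.

End HKDynamics.

Section IndependentBlocks.
Context {R : realType} {d : measure_display} {T : measurableType d}.
Variables (P : probability T R) (n : nat).
Variables (X : nat * 'I_n -> T -> R) (B : nat * 'I_n -> set R).
Hypothesis mXB : forall k, measurable (X k @^-1` B k).
Hypothesis indepXB : forall s, uniq s ->
  P (\bigcap_(k in [set` s]) (X k @^-1` B k)) = (\prod_(k <- s) P (X k @^-1` B k))%E.

Definition hits (s : seq (nat * 'I_n)) : set T :=
  \bigcap_(k in [set` s]) (X k @^-1` B k).

Lemma hits_nil : hits [::] = setT.
Proof. by apply/seteqP; split => w // _ k /=; rewrite in_nil. Qed.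

Lemma hits_cons k s : hits (k :: s) = X k @^-1` B k `&` hits s.
Proof.
apply/seteqP; split => w.
  by move=> h; split => [|j hj]; apply: h; rewrite /= in_cons ?eqxx ?hj ?orbT.
by move=> [h1 h2] j /=; rewrite in_cons => /orP[/eqP ->|hj] //; exact: h2.
Qed.

Lemma hits_cat s t : hits (s ++ t) = hits s `&` hits t.
Proof.
apply/seteqP; split => w.
  by move=> h; split => k hk; apply: h => /=; rewrite mem_cat hk ?orbT.
by move=> [h1 h2] k /=; rewrite mem_cat => /orP[hk|hk]; [exact: h1|exact: h2].
Qed.

Lemma measurable_hits s : measurable (hits s).
Proof. by elim: s => [|k s IH]; rewrite ?hits_nil ?hits_cons //; exact: measurableI. Qed.

Lemma hits_catM s t : uniq (s ++ t) -> P (hits (s ++ t)) = (P (hits s) * P (hits t))%E.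
Proof.
move=> u; have := u; rewrite cat_uniq => /and3P[us _ ut].
by rewrite /hits indepXB // big_cat /= -!indepXB.
Qed.

Variable L : nat.

Definition block (N : nat) : seq (nat * 'I_n) :=
  [seq ((L * N + s)%N, i) | s <- iota 0 L, i <- enum 'I_n].

Lemma block_uniq N : uniq (block N).
Proof.
rewrite /block allpairs_uniq ?iota_uniq ?enum_uniq //.
by move=> [a i] [b j] _ _ /= [/addnI -> ->].
Qed.

Lemma mem_block N k : (k \in block N) = (L * N <= k.1 < L * N + L)%N.
Proof.
apply/allpairsP/idP.
  by move=> [[s i] /= [hs _ ->]]; move: hs; rewrite mem_iota add0n /= leq_addr ltn_add2l.
case: k => t i /= /andP[h1 h2]; exists (t - L * N, i)%N => /=; split.
- by rewrite mem_iota add0n ltn_subLR // addnC.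
- by rewrite mem_enum.
- by rewrite subnKC.
Qed.

Fixpoint misses_blocks (N : nat) : set T :=
  if N is N'.+1 then misses_blocks N' `&` ~` hits (block N') else setT.

Lemma measurable_misses_blocks N : measurable (misses_blocks N).
Proof.
elim: N => [|N IH] //=; apply: measurableI => //.
exact/measurableC/measurable_hits.
Qed.

Variable q : R.
Hypothesis prob_block : forall N, P (hits (block N)) = q%:E.

Lemma prob_misses_blocks N s : uniq s -> (forall k, k \in s -> L * N <= k.1)%N ->
  P (misses_blocks N `&` hits s) = (((1 - q) ^+ N)%:E * P (hits s))%E.
Proof.
elim: N s => [|N IH] s us hs; first by rewrite /= setTI expr0 mul1e.
rewrite /= -setIA (setIC (~` _)) setIA -setDE.
have mA : measurable (misses_blocks N `&` hits s).
  exact: measurableI (measurable_misses_blocks N) (measurable_hits s).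
rewrite measureD //; first last.
- by apply: le_lt_trans (probability_le1 P mA) _; rewrite ltry.
- exact: measurable_hits.
have us' : uniq (s ++ block N).
  rewrite cat_uniq us block_uniq andbT; apply/hasPn => k /=.
  rewrite mem_block => /andP[_ h]; apply/negP => /hs.
  by rewrite mulnS addnC leqNgt h.
have hs' k : k \in s -> (L * N <= k.1)%N.
  by move/hs; apply: leq_trans; rewrite leq_mul2l leqnSn orbT.
rewrite -setIA -hits_cat.
rewrite [X in (_ - X)%E](_ : _ = ((1 - q) ^+ N)%:E * P (hits (s ++ block N)))%E; last first.
  by apply: IH => // k; rewrite mem_cat mem_block => /orP[/hs'|/andP[]].
rewrite [X in (X - _)%E](_ : _ = ((1 - q) ^+ N)%:E * P (hits s))%E; last exact: IH.
rewrite hits_catM // prob_block -(fineK (fin_num_measure P _ (measurable_hits s))).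
by rewrite -!EFinM -EFinB exprS; congr (_%:E); ring.
Qed.

Lemma ae_hits_block : 0 < q -> {ae P, forall w, exists N, hits (block N) w}.
Proof.
move=> q0; set G := \bigcap_N ~` hits (block N).
have mG : measurable G.
  by apply: bigcapT_measurable => N; exact/measurableC/measurable_hits.
have q1 : q <= 1.
  by rewrite -lee_fin -(prob_block 0); exact: probability_le1 (measurable_hits _).
have PG : P G = 0%E.
  apply/eqP; rewrite eq_le measure_ge0 andbT.
  rewrite -(fineK (fin_num_measure P _ mG)) lee_fin.
  apply/ler_addgt0Pr => e e0; rewrite add0r.
  have q01 : 0 <= 1 - q < 1 by apply/andP; split; lra.
  have [N hN] := expr_le_eventually _ _ q01 e0.
  apply: le_trans (hN N (leqnn N)); rewrite -lee_fin fineK ?fin_num_measure //.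
  have GF : G `<=` misses_blocks N.
    by elim: N {hN} => [|N IH] //= w hw; split; [exact: IH|exact: hw].
  apply: le_trans (le_measure _ (mem_set mG) (mem_set (measurable_misses_blocks N)) GF) _.
  rewrite [X in (X <= _)%E](_ : _ = ((1 - q) ^+ N)%:E) //.
  have : P (misses_blocks N `&` hits [::]) = (((1 - q) ^+ N)%:E * P (hits [::]))%E.
    exact: prob_misses_blocks.
  by rewrite hits_nil setIT probability_setT mule1.
by exists G; split => // w /= hw N _ hN; apply: hw; exists N.
Qed.

End IndependentBlocks.

Section NoiseTails.
Context {R : realType} {d : measure_display} {T : measurableType d}.
Variable P : probability T R.
Context {delta : R}.
Hypothesis delta_ge0 : 0 <= delta.

(* Otherwise [Y <= 0] almost surely, so [E Y^+ = 0 = E Y^-] and the bound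
   [E Y^2 <= delta E Y^-] contradicts the positive second moment. *)
Lemma exists_pos_tail (Y : T -> R) : measurable_fun setT Y ->
  (\forall w \ae P, `|Y w| <= delta) ->
  (\int[P]_w ((EFin \o Y)^\+ w) = \int[P]_w ((EFin \o Y)^\- w))%E ->
  (0 < \int[P]_w ((Y w) ^+ 2)%:E)%E ->
  exists2 c, 0 < c & (0 < P (Y @^-1` `[c, +oo[))%E.
Proof.
move=> mY hb heq h2; apply: contrapT => hn.
have tail0 k : P (Y @^-1` `[k.+1%:R^-1, +oo[) = 0%E.
  apply/eqP; rewrite eq_le measure_ge0 andbT leNgt; apply/negP => hp.
  by apply: hn; exists k.+1%:R^-1; rewrite ?invr_gt0 ?ltr0n.
have hneg : \forall w \ae P, Y w <= 0.
  apply: (negligibleS _ (negligible_bigcup (F := fun k => Y @^-1` `[k.+1%:R^-1, +oo[) _)).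
    move=> w /= /negP; rewrite -ltNge => hw.
    exists (Num.truncn (Y w)^-1) => //=.
    rewrite in_itv /= andbT -(invrK (Y w)) lef_pV2 ?posrE ?invr_gt0 ?ltr0n //.
    by rewrite invrK; exact: ltW (truncnS_gt _).
  move=> k; exists (Y @^-1` `[k.+1%:R^-1, +oo[); split; [|exact: tail0|by []].
  by rewrite -[X in measurable X]setTI; apply: mY => //; exact: measurable_itv.
have hpos0 : (\int[P]_w ((EFin \o Y)^\+ w) = 0)%E.
  apply/eqP; rewrite eq_le integral_ge0 ?andbT => [|w _]; last exact: funepos_ge0.
  rewrite -(integral0 P setT); apply: ae_ge0_le_integral => //.
    by apply: measurable_funepos; exact/measurable_EFinP.
  by apply: filterS hneg => w hw _; rewrite funeposE /= ge_max lexx andbT lee_fin.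
have hsq : (\int[P]_w ((Y w) ^+ 2)%:E <= \int[P]_w (delta%:E * (EFin \o Y)^\- w))%E.
  apply: ae_ge0_le_integral => //.
  - by move=> w _; rewrite lee_fin sqr_ge0.
  - by apply/measurable_EFinP; exact: measurable_funX.
  - by move=> w _; rewrite mule_ge0 // funeneg_ge0.
  - by apply/measurable_funeM/measurable_funeneg/measurable_EFinP.
  apply: filterS2 hneg hb => w hw hw2 _; rewrite funenegE /= maxEle.
  move: hw2; rewrite ler_norml => /andP[h1 h3].
  case: ifP; rewrite lee_fin oppr_le0 => h; first by rewrite mule0 lee_fin expr2; nra.
  by rewrite -EFinM lee_fin expr2; move/negbT: h; rewrite -ltNge => h; nra.
have := lt_le_trans h2 hsq.
rewrite ge0_integralZl //; last by apply/measurable_funeneg/measurable_EFinP.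
by rewrite -heq hpos0 mule0 ltxx.
Qed.

Lemma exists_two_sided_tail (X : T -> R) : measurable_fun setT X ->
  (\forall w \ae P, `|X w| <= delta) ->
  (\int[P]_w (X w)%:E = 0)%E -> (0 < \int[P]_w ((X w) ^+ 2)%:E)%E ->
  exists2 c, 0 < c & (0 < P (X @^-1` `[c, +oo[))%E /\
                     (0 < P (X @^-1` `]-oo, (- c)%R]))%E.
Proof.
move=> mX hb hmean hvar.
have heq : (\int[P]_w ((EFin \o X)^\+ w) = \int[P]_w ((EFin \o X)^\- w))%E.
  move: hmean; rewrite integralE.
  case: (\int[P]_w _)%E => [a||]; case: (\int[P]_w _)%E => [b||] //= /eqP.
  by rewrite eqe subr_eq0 => /eqP ->.
have [c1 c10 hc1] := exists_pos_tail X mX hb heq hvar.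
have mXN : measurable_fun setT (fun w => - X w) := measurable_funN mX.
have hbN : \forall w \ae P, `|- X w| <= delta.
  by apply: filterS hb => w; rewrite normrN.
have heqN : (\int[P]_w ((EFin \o (fun w => (- X w)%R))^\+ w) =
             \int[P]_w ((EFin \o (fun w => (- X w)%R))^\- w))%E.
  have -> : EFin \o (fun w => - X w) = (fun w => oppe ((EFin \o X) w)).
    by apply/funext => w /=; rewrite EFinN.
  by rewrite funeposN funenegN heq.
have hvarN : (0 < \int[P]_w ((- X w)%R ^+ 2)%:E)%E.
  by rewrite (eq_integral (fun w => (X w ^+ 2)%:E)) // => w _; rewrite sqrrN.
have [c2 c20 hc2] := exists_pos_tail _ mXN hbN heqN hvarN.
exists (Num.min c1 c2); first by rewrite lt_min c10 c20.
have mitv (A : set R) : measurable A -> X @^-1` A \in measurable.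
  by move=> mA; apply/mem_set; rewrite -[X in measurable X]setTI; exact: mX.
split.
  apply: lt_le_trans hc1 _; apply: le_measure; try exact: mitv (measurable_itv _).
  by move=> w /=; rewrite !in_itv /= !andbT; apply: le_trans; rewrite ge_min lexx.
apply: lt_le_trans hc2 _; apply: le_measure; try exact: mitv (measurable_itv _).
  apply/mem_set; rewrite -[X in measurable X]setTI.
  by apply: mXN => //; exact: measurable_itv.
move=> w /=; rewrite !in_itv /= !andbT => h.
have : Num.min c1 c2 <= c2 by rewrite ge_min lexx orbT.
lra.
Qed.

End NoiseTails.

Section SteeringBlocks.
Context {R : realType} {d : measure_display} {T : measurableType d}.
Variable P : probability T R.
Context {n : nat}.
Variable X : nat * 'I_n -> T -> R.
Hypothesis mX : forall k, measurable_fun setT (X k).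
Hypothesis indepX : mutually_independent P X.
Hypothesis identX : identically_distributed P X.
Variables (c : R) (K : nat) (k0 : nat * 'I_n).
Hypothesis up_pos : (0 < P (X k0 @^-1` `[c, +oo[))%E.
Hypothesis down_pos : (0 < P (X k0 @^-1` `]-oo, (- c)%R]))%E.

Definition steering_set (k : nat * 'I_n) : set R :=
  if (k.1 %% (K + K) < K)%N then `[c, +oo[%classic else `]-oo, (- c)%R]%classic.

Local Notation hitsS := (hits n X steering_set).
Local Notation blockS := (block n (K + K)).

Lemma measurable_steering_set k : measurable (steering_set k).
Proof. by rewrite /steering_set; case: ifP => _; exact: measurable_itv. Qed.

Lemma measurable_preimage_steering_set k : measurable (X k @^-1` steering_set k).
Proof.
by rewrite -[X in measurable X]setTI; apply: mX => //; exact: measurable_steering_set.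
Qed.

Lemma indep_steering s : uniq s ->
  P (\bigcap_(k in [set` s]) (X k @^-1` steering_set k)) =
  (\prod_(k <- s) P (X k @^-1` steering_set k))%E.
Proof. by move=> us; apply: indepX => // k; exact: measurable_steering_set. Qed.

Definition steering_prob : \bar R :=
  (\prod_(s <- iota 0 (K + K)) \prod_(i <- enum 'I_n)
     P (X (s, i) @^-1` steering_set (s, i)))%E.

Lemma prob_steering_block N : P (hitsS (blockS N)) = steering_prob.
Proof.
rewrite /hits indep_steering ?block_uniq // /block big_allpairs_dep.
apply: eq_bigr => s _; apply: eq_bigr => i _.
have -> : steering_set ((K + K) * N + s, i)%N = steering_set (s, i).
  by rewrite /steering_set /= mulnC modnMDl.
by apply: identX; exact: measurable_steering_set.
Qed.

Lemma steering_prob_gt0 : (0 < steering_prob)%E.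
Proof.
apply: (big_ind (fun x => 0 < x)%E) => // [x y|s _]; first exact: mule_gt0.
apply: (big_ind (fun x => 0 < x)%E) => // [x y|i _]; first exact: mule_gt0.
rewrite (identX _ k0); last exact: measurable_steering_set.
by rewrite /steering_set; case: ifP.
Qed.

Lemma ae_steering_block : {ae P, forall w, exists t0, forall s i, (s < K)%N ->
  c <= X (t0 + s, i)%N w /\ X (t0 + K + s, i)%N w <= - c}.
Proof.
have Qfin : steering_prob = (fine steering_prob)%:E.
  rewrite -(prob_steering_block 0) fineK //.
  exact/fin_num_measure/measurable_hits/measurable_preimage_steering_set.
have q0 : 0 < fine steering_prob by rewrite -lte_fin -Qfin steering_prob_gt0.
have := ae_hits_block P n _ _ measurable_preimage_steering_set
  indep_steering (K + K) _ (fun N => etrans (prob_steering_block N) Qfin) q0.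
apply: filterS => w [N hN]; exists ((K + K) * N)%N => s i hs.
have hit r : (r < K + K)%N ->
    steering_set ((K + K) * N + r, i)%N (X ((K + K) * N + r, i)%N w).
  by move=> hr; apply: (hN (_, i)); rewrite /= mem_block /= leq_addr ltn_add2l.
have mod r : (r < K + K)%N -> (((K + K) * N + r) %% (K + K) = r)%N.
  by move=> hr; rewrite mulnC modnMDl modn_small.
split.
  have := hit s (ltn_addr K hs); rewrite /steering_set /= mod ?ltn_addr // hs.
  by rewrite /= in_itv /= andbT.
have := hit (K + s)%N; rewrite ltn_add2l => /(_ hs); rewrite /steering_set /=.
by rewrite mod ?ltn_add2l // ltnNge leq_addr /= in_itv /= addnA.
Qed.

End SteeringBlocks.

Theorem theorem1 (R : realType) (d : measure_display) (T : measurableType d)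
  (P : probability T R)
  (n m : nat) (hn : (0 < n)%N) (hm : (0 < m)%N)
  (B1 eps delta : R) (hB1 : 0 <= B1 <= 1) (heps : 0 < eps <= 1)
  (x0 : 'I_n -> R) (hx0 : forall i, 0 <= x0 i <= 1)
  (xi : nat -> 'I_n -> {RV P >-> R})
  (hind : mutually_independent P (fun k : nat * 'I_n => (xi k.1 k.2 : T -> R)))
  (hid : identically_distributed P (fun k : nat * 'I_n => (xi k.1 k.2 : T -> R)))
  (hmean : forall t i, (\int[P]_w (xi t i w)%:E = 0)%E)
  (hvar : forall t i, (0 < \int[P]_w ((xi t i w) ^+ 2)%:E)%E)
  (hdelta : 0 < delta < eps / (2 * (n%:R + 1)))
  (hbound : forall t i, {ae P, forall w, `|xi t i w| <= delta}) :
  {ae P, forall w,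
    let x := fun t => hk_traj m eps B1 x0 (fun s j => xi s j w) t in
    limn_sup (fun t => diam (x t)) <= 2 * delta /\
    limn_sup (fun t => dist_to (x t) B1) <= (n%:R + 1) * delta}.
Proof.
case/andP: hdelta => delta0 delta_small; case/andP: heps => eps0 _.
pose X (k : nat * 'I_n) : T -> R := xi k.1 k.2.
have mX k : measurable_fun setT (X k) := measurable_funP (xi k.1 k.2).
pose k0 : nat * 'I_n := (0%N, Ordinal hn).
have [c c0 [up_pos down_pos]] :=
  exists_two_sided_tail P (ltW delta0) (X k0) (mX k0) (hbound _ _) (hmean _ _) (hvar _ _).
pose K := (Num.truncn c^-1).+1.
have hK : 1 <= K%:R * c by rewrite -ler_pdivrMr // div1r; exact: ltW (truncnS_gt _).
have hd2 : (n%:R + 1) * delta < eps / 2.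
  move: delta_small; rewrite ltr_pdivlMr ?mulr_gt0 ?ltr_pwDr ?ler0n //.
  by rewrite ltr_pdivlMr //; lra.
have bounded : {ae P, forall w, forall t i, `|xi t i w| <= delta}.
  by apply: ae_foralln => t; apply: filter_forall => i; exact: hbound.
have steered := ae_steering_block P X mX hind hid c K k0 up_pos down_pos.
apply: filterS2 bounded steered => w hz [t0 hpat].
exact: hk_limn_sup_bounds hm hB1 eps0 x0 _ _ c K t0 hx0 (ltW delta0) hd2 hz c0 hK hpat.
Qed.
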